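(* For $i=1,2$ let $\pi^{(i)}$, $\sigma^{(i)}$, $\pi'^{(i)}$ be formal Poisson deformations of $\pi_0$, $\sigma_0$, $\pi_0'$ respectively, and let $\Phi^{(i)}:(\mathcal{A}[[\lambda]],\pi^{(i)})\to(\mathcal{B}[[\lambda]],\sigma^{(i)})$ and $\Phi'^{(i)}:(\mathcal{A}'[[\lambda]],\pi'^{(i)})\to(\mathcal{B}[[\lambda]],\sigma^{(i)})$ be $\mathbb{K}[[\lambda]]$-linear Poisson morphisms with zeroth-order terms $\phi_0$ and $\phi_0'$ respectively, whose images Poisson commute with respect to $\sigma^{(i)}$. Suppose there are $\mathbb{K}[[\lambda]]$-linear Poisson isomorphisms $\psi:(\mathcal{A}[[\lambda]],\pi^{(1)})\to(\mathcal{A}[[\lambda]],\pi^{(2)})$ and $\Psi:(\mathcal{B}[[\lambda]],\sigma^{(1)})\to(\mathcal{B}[[\lambda]],\sigma^{(2)})$ with $\Phi^{(2)}\circ\psi=\Psi\circ\Phi^{(1)}$. Then there is a Poisson isomorphism $\psi':(\mathcal{A}'[[\lambda]],\pi'^{(1)})\to(\mathcal{A}'[[\lambda]],\pi'^{(2)})$ such that $\Phi'^{(2)}\circ\psi'=\Psi\circ\Phi'^{(1)}$.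
   Context: $\mathbb{K}$ is a field of characteristic zero. $\mathcal{A},\mathcal{B}$ are commutative $\mathbb{K}$-algebras with Poisson brackets $\pi_0$, $\sigma_0$, and $\phi_0:\mathcal{A}\to\mathcal{B}$ is a Poisson morphism. $\mathcal{A}'$ is the Poisson commutant $\{b\in\mathcal{B}:\sigma_0(b,\phi_0(a))=0\ \forall a\}$ with the induced bracket $\pi_0'$, and $\phi_0':\mathcal{A}'\to\mathcal{B}$ is the inclusion. A formal Poisson deformation of a Poisson bracket on an algebra $\mathcal{R}$ is a $\mathbb{K}[[\lambda]]$-bilinear Poisson bracket on $\mathcal{R}[[\lambda]]$ (with $\lambda$-linearly extended product) whose zeroth-order term is the given bracket. Poisson morphisms preserve both products and brackets. *)

From HB Require Import structures.
From mathcomp Require Import all_boot all_order all_algebra.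
Set Implicit Arguments.
Unset Strict Implicit.
Unset Printing Implicit Defensive.
Import GRing.Theory.
Local Open Scope ring_scope.

Section Classical.
Variables (K : fieldType).

Definition is_poisson (X : comAlgType K) (p : X -> X -> X) : Prop :=
  [/\ (forall (c : K) x y z, p (c *: x + y) z = c *: p x z + p y z),
      (forall (c : K) x y z, p x (c *: y + z) = c *: p x y + p x z),
      (forall x y, p x y = - p y x),
      (forall x y z, p x (y * z) = p x y * z + y * p x z) &
      (forall x y z, p x (p y z) + p y (p z x) + p z (p x y) = 0)].

Definition is_poisson_morph (X Y : comAlgType K)
    (p : X -> X -> X) (q : Y -> Y -> Y) (f : X -> Y) : Prop :=
  [/\ (forall (c : K) x y, f (c *: x + y) = c *: f x + f y),
      (forall x y, f (x * y) = f x * f y) &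
      (forall x y, f (p x y) = q (f x) (f y))].

Definition poisson_commutant (X Y : comAlgType K)
    (q : Y -> Y -> Y) (f : X -> Y) : Y -> Prop :=
  fun b => forall a, q b (f a) = 0.
End Classical.

(* A series is its coefficient sequence; [a n] is the coefficient of lambda^n. *)
Definition ps (X : Type) := nat -> X.

Section Series.
Variables (K : fieldType).

Definition psadd (X : comAlgType K) (a b : ps X) : ps X := fun n => a n + b n.

Definition psmul (X : comAlgType K) (a b : ps X) : ps X :=
  fun n => \sum_(i < n.+1) a i * b (n - i)%N.

Definition psscale (X : comAlgType K) (c : ps K) (a : ps X) : ps X :=
  fun n => \sum_(i < n.+1) c i *: a (n - i)%N.

Definition in_ps (X : Type) (D : X -> Prop) (a : ps X) : Prop := forall n, D (a n).

Definition allX (X : Type) : X -> Prop := fun _ => True.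

(* P is a K[[lambda]]-bilinear Poisson bracket on D[[lambda]] (D a subalgebra
   of X; the bracket is only relevant on series with coefficients in D) *)
Definition ps_poisson_on (X : comAlgType K) (D : X -> Prop)
    (P : ps X -> ps X -> ps X) : Prop :=
  (forall a b, in_ps D a -> in_ps D b -> in_ps D (P a b)) /\
  [/\ (forall (c : ps K) a a' b, in_ps D a -> in_ps D a' -> in_ps D b ->
          P (psadd (psscale c a) a') b = psadd (psscale c (P a b)) (P a' b)),
      (forall (c : ps K) a b b', in_ps D a -> in_ps D b -> in_ps D b' ->
          P a (psadd (psscale c b) b') = psadd (psscale c (P a b)) (P a b')),
      (forall a b, in_ps D a -> in_ps D b -> P a b = fun n => - P b a n),
      (forall a b c, in_ps D a -> in_ps D b -> in_ps D c ->
          P a (psmul b c) = psadd (psmul (P a b) c) (psmul b (P a c))) &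
      (forall a b c, in_ps D a -> in_ps D b -> in_ps D c ->
          psadd (psadd (P a (P b c)) (P b (P c a))) (P c (P a b)) = fun _ => 0)].

Definition ps_deformation_on (X : comAlgType K) (D : X -> Prop)
    (p0 : X -> X -> X) (P : ps X -> ps X -> ps X) : Prop :=
  ps_poisson_on D P /\
  (forall a b, in_ps D a -> in_ps D b -> P a b 0%N = p0 (a 0%N) (b 0%N)).

Definition ps_poisson_morph_on (X Y : comAlgType K) (D : X -> Prop) (E : Y -> Prop)
    (P : ps X -> ps X -> ps X) (Q : ps Y -> ps Y -> ps Y) (f : ps X -> ps Y) : Prop :=
  [/\ (forall a, in_ps D a -> in_ps E (f a)),
      (forall (c : ps K) a b, in_ps D a -> in_ps D b ->
          f (psadd (psscale c a) b) = psadd (psscale c (f a)) (f b)),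
      (forall a b, in_ps D a -> in_ps D b -> f (psmul a b) = psmul (f a) (f b)) &
      (forall a b, in_ps D a -> in_ps D b -> f (P a b) = Q (f a) (f b))].

Definition ps_poisson_iso_on (X Y : comAlgType K) (D : X -> Prop) (E : Y -> Prop)
    (P : ps X -> ps X -> ps X) (Q : ps Y -> ps Y -> ps Y) (f : ps X -> ps Y) : Prop :=
  [/\ ps_poisson_morph_on D E P Q f,
      (forall a b, in_ps D a -> in_ps D b -> f a = f b -> a = b) &
      (forall b, in_ps E b -> exists2 a, in_ps D a & f a = b)].
End Series.

(* Since [Phi'] is the identity at order zero, it is injective, and its image is
   exactly the [sigma]-commutant of the image of [Phi]: a series commuting with
   [Phi(A[[lambda]])] has its leading coefficient in the classical commutant
   [A'], subtracting [Phi'] of that coefficient leaves a commuting series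
   divisible by [lambda], and iterating builds a preimage order by order.
   Because [Phi2 \o psi = Psi \o Phi1] with [psi] onto, [Psi] maps the commutant
   of [Phi1(A[[lambda]])] onto that of [Phi2(A[[lambda]])], so
   [psi' := Phi'2^-1 \o Psi \o Phi'1] is well defined; it is a Poisson morphism
   because [Phi'2] is an injective one, and bijective because [Psi] is. *)
From mathcomp Require Import all_boot all_order all_algebra.
From Stdlib Require Import FunctionalExtensionality ClassicalEpsilon.
Set Implicit Arguments.
Unset Strict Implicit.
Unset Printing Implicit Defensive.
Import GRing.Theory.
Local Open Scope ring_scope.

Lemma in_psT (X : Type) (a : ps X) : in_ps (@allX X) a.
Proof. by []. Qed.

Section SeriesAlgebra.
Variable K : fieldType.

Definition ps0 (X : nmodType) : ps X := fun _ => 0.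
Definition psC (X : nmodType) (x : X) : ps X := fun n => if n == 0%N then x else 0.
Definition pslam : ps K := fun n => if n == 1%N then 1 else 0.
Definition psshift (X : Type) (a : ps X) : ps X := fun n => a n.+1.
(* Phrased with [psscale] so that [ps_linear_on] applies to it verbatim. *)
Definition pssub (X : comAlgType K) (a b : ps X) : ps X :=
  psadd (psscale (psC (-1)) b) a.

Definition ps_linear_on (X Y : comAlgType K) (D : X -> Prop) (f : ps X -> ps Y) :=
  forall (c : ps K) a b, in_ps D a -> in_ps D b ->
    f (psadd (psscale c a) b) = psadd (psscale c (f a)) (f b).

Definition is_subspace (X : comAlgType K) (D : X -> Prop) :=
  D 0 /\ forall (c : K) x y, D x -> D y -> D (c *: x + y).

Definition is_mulclosed (X : comAlgType K) (D : X -> Prop) :=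
  forall x y, D x -> D y -> D (x * y).

Section Basics.
Variable X : comAlgType K.
Implicit Types (a b : ps X) (k : K).

Lemma psC0 : psC (0 : X) = ps0 X.
Proof. by apply: functional_extensionality => -[]. Qed.

Lemma psscaleC k a n : psscale (psC k) a n = k *: a n.
Proof.
rewrite /psscale big_ord_recl big1 ?addr0 ?subn0 // => i _.
by rewrite /psC /= /bump /= scale0r.
Qed.

Lemma psscale_lam0 a : psscale pslam a 0%N = 0.
Proof. by rewrite /psscale big_ord1 /pslam /= scale0r. Qed.

Lemma psscale_lamS a n : psscale pslam a n.+1 = a n.
Proof.
rewrite /psscale !big_ord_recl big1 => [|i _].
  by rewrite /pslam /= scale0r scale1r add0r addr0 subSS subn0.
by rewrite /pslam /= /bump /= scale0r.
Qed.

Lemma pssubE a b n : pssub a b n = a n - b n.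
Proof. by rewrite /pssub /psadd psscaleC scaleN1r addrC. Qed.

Lemma pssubv a : pssub a a = ps0 X.
Proof. by apply: functional_extensionality => n; rewrite pssubE subrr. Qed.

Lemma ps_decomp a : a = psadd (psscale pslam (psshift a)) (psC (a 0%N)).
Proof.
apply: functional_extensionality => -[|n] /=; rewrite /psadd.
  by rewrite psscale_lam0 add0r.
by rewrite psscale_lamS addr0.
Qed.

Lemma pslam_scale_eq0 a : psadd (psscale pslam a) (ps0 X) = ps0 X -> a = ps0 X.
Proof.
move=> H; apply: functional_extensionality => n.
by have := congr1 (fun f => f n.+1) H; rewrite /psadd psscale_lamS addr0.
Qed.

End Basics.

Section Subspace.
Variables (X : comAlgType K) (D : X -> Prop) (HD : is_subspace D).
Implicit Types (a b : ps X).

Lemma subspaceD x y : D x -> D y -> D (x + y).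
Proof. by case: HD => _ HDl Dx Dy; rewrite -[x]scale1r; apply: HDl. Qed.

Lemma subspace_sum n (F : 'I_n -> X) : (forall i, D (F i)) -> D (\sum_(i < n) F i).
Proof. by case: HD => D0 _ DF; apply: (big_ind D) => //; apply: subspaceD. Qed.

Lemma in_ps0 : in_ps D (ps0 X).
Proof. by case: HD => D0 _ n. Qed.

Lemma in_psC x : D x -> in_ps D (psC x).
Proof. by case: HD => D0 _ Dx [|n]. Qed.

Lemma in_ps_lin (c : ps K) a b :
  in_ps D a -> in_ps D b -> in_ps D (psadd (psscale c a) b).
Proof.
case: HD => D0 HDl Da Db n; apply: subspaceD => //.
by apply: subspace_sum => i; rewrite -[_ *: _]addr0; apply: HDl.
Qed.

Lemma in_ps_mul a b : is_mulclosed D -> in_ps D a -> in_ps D b -> in_ps D (psmul a b).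
Proof. by move=> HDm Da Db n; apply: subspace_sum => i; apply: HDm. Qed.

End Subspace.

Lemma is_subspace_allX (X : comAlgType K) : is_subspace (@allX X).
Proof. by []. Qed.

Section LinearMap.
Variables (X Y : comAlgType K) (D : X -> Prop) (f : ps X -> ps Y).
Hypotheses (HD : is_subspace D) (Hf : ps_linear_on D f).

Lemma ps_linear_sub a b : in_ps D a -> in_ps D b -> f (pssub a b) = pssub (f a) (f b).
Proof. by move=> Da Db; rewrite /pssub Hf. Qed.

Lemma ps_linear0 : f (ps0 X) = ps0 Y.
Proof.
have D0 := in_ps0 HD.
by rewrite -(pssubv (ps0 X)) ps_linear_sub // pssubv.
Qed.

Lemma ps_linear_kernel_shift d :
  in_ps D d -> d 0%N = 0 -> f d = ps0 Y -> f (psshift d) = ps0 Y.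
Proof.
move=> Dd d0 fd; apply: pslam_scale_eq0.
rewrite -{1}ps_linear0 -Hf; last 2 first.
- by move=> n; apply: Dd.
- exact: in_ps0.
by rewrite -psC0 -d0 -ps_decomp.
Qed.

End LinearMap.

Section IdentityAtOrderZero.
Variables (X : comAlgType K) (D : X -> Prop) (f : ps X -> ps X).
Hypotheses (HD : is_subspace D) (Hf : ps_linear_on D f)
  (Hf0 : forall b, in_ps D b -> f b 0%N = b 0%N).

Lemma ps_linear_id0_kernel d : in_ps D d -> f d = ps0 X -> d = ps0 X.
Proof.
move=> Dd fd; apply: functional_extensionality => n.
elim: n d Dd fd => [|n IH] d Dd fd; first by rewrite -(@Hf0 d Dd) fd.
apply: (IH (psshift d)); first by move=> k; apply: Dd.
by apply: (ps_linear_kernel_shift HD Hf) => //; rewrite -(@Hf0 d Dd) fd.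
Qed.

Lemma ps_linear_id0_inj a b : in_ps D a -> in_ps D b -> f a = f b -> a = b.
Proof.
move=> Da Db fab.
have ab0 : pssub a b = ps0 X.
  apply: ps_linear_id0_kernel; first exact: in_ps_lin.
  by rewrite (ps_linear_sub Hf) // fab pssubv.
apply: functional_extensionality => n.
by apply/eqP; rewrite -subr_eq0 -pssubE ab0.
Qed.

(* Successive approximation: [b m] is the leading coefficient of the [m]-th
   remainder [r m], and [f] maps the [m]-th tail of [b] onto [r m]. *)
Lemma ps_linear_id0_surj (S : ps X -> Prop) :
  (forall c, S c -> D (c 0%N)) ->
  (forall c, S c -> S (psshift (pssub c (f (psC (c 0%N)))))) ->
  forall c, S c -> exists2 b, in_ps D b & f b = c.
Proof.
move=> S_coef0 S_step c Sc.
pose r m := iter m (fun c => psshift (pssub c (f (psC (c 0%N))))) c.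
have Sr m : S (r m) by elim: m => [|m IH] //=; apply: S_step.
pose b m := r m 0%N.
have Db : in_ps D b by move=> m; apply: S_coef0.
have tail_b m : f (fun k => b (k + m)%N) = r m.
  apply: functional_extensionality => n; elim: n m => [|n IH] m.
    by rewrite Hf0 // => k; apply: Db.
  have -> : (fun k => b (k + m)%N) =
      psadd (psscale pslam (fun k => b (k + m.+1)%N)) (psC (b m)).
    rewrite [LHS]ps_decomp; congr (psadd (psscale _ _) _).
    by apply: functional_extensionality => k; rewrite /psshift addnS.
  rewrite Hf; [|by move=> k; apply: Db | exact: in_psC].
  by rewrite /psadd psscale_lamS IH /= /psshift pssubE subrK.
exists b => //; rewrite -[c]/(r 0%N) -tail_b.
by congr f; apply: functional_extensionality => k; rewrite addn0.
Qed.

End IdentityAtOrderZero.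

Lemma ps_poisson_morph_comp (X Y Z : comAlgType K) (D : X -> Prop)
    (P : ps X -> ps X -> ps X) (Q : ps Y -> ps Y -> ps Y) (R : ps Z -> ps Z -> ps Z)
    (f : ps X -> ps Y) (g : ps Y -> ps Z) :
  ps_poisson_morph_on D (@allX Y) P Q f -> ps_poisson_morph_on (@allX Y) (@allX Z) Q R g ->
  ps_poisson_morph_on D (@allX Z) P R (g \o f).
Proof.
case=> _ f_lin f_mul f_br [_ g_lin g_mul g_br].
split=> //= [c a b Da Db|a b Da Db|a b Da Db].
- by rewrite f_lin // g_lin.
- by rewrite f_mul // g_mul.
- by rewrite f_br // g_br.
Qed.

Lemma ps_poisson_morph_factor (X Y : comAlgType K) (D : X -> Prop)
    (P1 P2 : ps X -> ps X -> ps X) (Q : ps Y -> ps Y -> ps Y) (j F : ps X -> ps Y) :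
  is_subspace D -> is_mulclosed D ->
  (forall a b, in_ps D a -> in_ps D b -> in_ps D (P1 a b)) ->
  (forall a b, in_ps D a -> in_ps D b -> in_ps D (P2 a b)) ->
  ps_poisson_morph_on D (@allX Y) P2 Q j ->
  (forall a b, in_ps D a -> in_ps D b -> j a = j b -> a = b) ->
  ps_poisson_morph_on D (@allX Y) P1 Q F ->
  (forall a, in_ps D a -> exists2 x, in_ps D x & j x = F a) ->
  exists f, ps_poisson_morph_on D D P1 P2 f /\ forall a, in_ps D a -> j (f a) = F a.
Proof.
move=> HD HDm P1D P2D [_ j_lin j_mul j_br] j_inj [_ F_lin F_mul F_br] F_im.
pose lift a x := in_ps D x /\ j x = F a.
pose f a := epsilon (inhabits (ps0 X)) (lift a).
have fP a : in_ps D a -> in_ps D (f a) /\ j (f a) = F a.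
  move=> Da; have [x Dx jx] := F_im a Da.
  by apply: (epsilon_spec _ (lift a)); exists x.
exists f; split=> [|a Da]; last by case: (fP a Da).
split=> [a Da|c a b Da Db|a b Da Db|a b Da Db]; first by case: (fP a Da).
all: have [Dfa jfa] := fP a Da; have [Dfb jfb] := fP b Db.
- have [Df jf] := fP _ (in_ps_lin HD c Da Db).
  apply: j_inj => //; first exact: in_ps_lin.
  by rewrite jf F_lin // j_lin // jfa jfb.
- have [Df jf] := fP _ (in_ps_mul HD HDm Da Db).
  apply: j_inj => //; first exact: in_ps_mul.
  by rewrite jf F_mul // j_mul // jfa jfb.
- have [Df jf] := fP _ (P1D a b Da Db).
  apply: j_inj => //; first exact: P2D.
  by rewrite jf F_br // j_br // jfa jfb.
Qed.

Lemma commutant_transport (X Y : comAlgType K) (Q1 Q2 : ps Y -> ps Y -> ps Y)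
    (Phi1 Phi2 : ps X -> ps Y) (psi : ps X -> ps X) (Psi : ps Y -> ps Y) :
  ps_poisson_iso_on (@allX Y) (@allX Y) Q1 Q2 Psi ->
  (forall a, exists a0, psi a0 = a) ->
  (forall a, Phi2 (psi a) = Psi (Phi1 a)) ->
  forall c, (forall a, Q2 (Phi2 a) (Psi c) = ps0 Y) <-> (forall a, Q1 (Phi1 a) c = ps0 Y).
Proof.
move=> [[_ Psi_lin _ Psi_br] Psi_inj _] psi_onto intertwine c.
have Psi0 : Psi (ps0 Y) = ps0 Y := ps_linear0 (is_subspace_allX Y) Psi_lin.
have Psi_comm a : Psi (Q1 (Phi1 a) c) = Q2 (Phi2 (psi a)) (Psi c).
  by rewrite Psi_br // intertwine.
split=> comm a.
- by apply: Psi_inj => //; rewrite Psi_comm comm Psi0.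
- by have [a0 <-] := psi_onto a; rewrite -Psi_comm comm Psi0.
Qed.

End SeriesAlgebra.

Section Commutant.
Variables (K : fieldType) (A B : comAlgType K) (sigma0 : B -> B -> B) (phi0 : A -> B).
Hypothesis Hsigma0 : is_poisson sigma0.
Local Notation D := (poisson_commutant sigma0 phi0).

Lemma commutant_subspace : is_subspace D.
Proof.
case: Hsigma0 => sigma0_lin _ _ _ _; split=> [a|c x y Dx Dy a].
  by have := sigma0_lin (-1) 0 0 (phi0 a); rewrite scaler0 addr0 scaleN1r addNr.
by rewrite sigma0_lin Dx Dy scaler0 addr0.
Qed.

Lemma commutant_mulclosed : is_mulclosed D.
Proof.
case: Hsigma0 => _ _ sigma0_anti sigma0_leibniz _ x y Dx Dy a.
rewrite sigma0_anti sigma0_leibniz (sigma0_anti _ x) (sigma0_anti _ y) Dx Dy.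
by rewrite !oppr0 mul0r mulr0 addr0 oppr0.
Qed.

Lemma commutant_coef0 (sig : ps B -> ps B -> ps B) (Phi : ps A -> ps B) (c : ps B) :
  (forall a b, sig a b 0%N = sigma0 (a 0%N) (b 0%N)) ->
  (forall a, Phi a 0%N = phi0 (a 0%N)) ->
  (forall a, sig (Phi a) c = ps0 B) -> D (c 0%N).
Proof.
move=> sig0 Phi0 c_comm x; case: Hsigma0 => _ _ sigma0_anti _ _.
have := congr1 (fun g => g 0%N) (c_comm (psC x)).
by rewrite /= sig0 Phi0 sigma0_anti /= => /eqP; rewrite oppr_eq0 => /eqP.
Qed.

Lemma commutant_in_image (sig : ps B -> ps B -> ps B) (Phi : ps A -> ps B)
    (Phi' : ps B -> ps B) :
  ps_deformation_on (@allX B) sigma0 sig ->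
  (forall a, Phi a 0%N = phi0 (a 0%N)) ->
  ps_linear_on D Phi' ->
  (forall b, in_ps D b -> Phi' b 0%N = b 0%N) ->
  (forall a b, in_ps D b -> sig (Phi a) (Phi' b) = ps0 B) ->
  forall c, (forall a, sig (Phi a) c = ps0 B) -> exists2 b, in_ps D b & Phi' b = c.
Proof.
move=> [[_ [_ sig_lin _ _ _]] sig0] Phi0 Phi'_lin Phi'0 Phi'_comm.
have sig0T a b : sig a b 0%N = sigma0 (a 0%N) (b 0%N) by apply: sig0.
have sigPhi_lin a : ps_linear_on (@allX B) (sig (Phi a)) by move=> *; apply: sig_lin.
have DS := commutant_subspace.
apply: (ps_linear_id0_surj DS Phi'_lin Phi'0) => [c c_comm|c c_comm a].
  exact: commutant_coef0 sig0T Phi0 c_comm.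
have DC := in_psC DS (commutant_coef0 sig0T Phi0 c_comm).
apply: (ps_linear_kernel_shift (is_subspace_allX B) (sigPhi_lin a)) => //.
- by rewrite pssubE Phi'0 // subrr.
- by rewrite (ps_linear_sub (sigPhi_lin a)) // c_comm Phi'_comm // pssubv.
Qed.

End Commutant.

Theorem proposition3p13 (K : fieldType) (charK : [pchar K] =i pred0)
  (A B : comAlgType K) (pi0 : A -> A -> A) (sigma0 : B -> B -> B) (phi0 : A -> B)
  (Hpi0 : is_poisson pi0) (Hsigma0 : is_poisson sigma0)
  (Hphi0 : is_poisson_morph pi0 sigma0 phi0)
  (pi1 pi2 : ps A -> ps A -> ps A) (sig1 sig2 : ps B -> ps B -> ps B)
  (pi'1 pi'2 : ps B -> ps B -> ps B)
  (Hpi1 : ps_deformation_on (@allX A) pi0 pi1)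
  (Hpi2 : ps_deformation_on (@allX A) pi0 pi2)
  (Hsig1 : ps_deformation_on (@allX B) sigma0 sig1)
  (Hsig2 : ps_deformation_on (@allX B) sigma0 sig2)
  (Hpi'1 : ps_deformation_on (poisson_commutant sigma0 phi0) sigma0 pi'1)
  (Hpi'2 : ps_deformation_on (poisson_commutant sigma0 phi0) sigma0 pi'2)
  (Phi1 Phi2 : ps A -> ps B) (Phi'1 Phi'2 : ps B -> ps B)
  (HPhi1 : ps_poisson_morph_on (@allX A) (@allX B) pi1 sig1 Phi1)
  (HPhi2 : ps_poisson_morph_on (@allX A) (@allX B) pi2 sig2 Phi2)
  (HPhi'1 : ps_poisson_morph_on (poisson_commutant sigma0 phi0) (@allX B) pi'1 sig1 Phi'1)
  (HPhi'2 : ps_poisson_morph_on (poisson_commutant sigma0 phi0) (@allX B) pi'2 sig2 Phi'2)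
  (HPhi1_0 : forall a : ps A, Phi1 a 0%N = phi0 (a 0%N))
  (HPhi2_0 : forall a : ps A, Phi2 a 0%N = phi0 (a 0%N))
  (HPhi'1_0 : forall b : ps B, in_ps (poisson_commutant sigma0 phi0) b -> Phi'1 b 0%N = b 0%N)
  (HPhi'2_0 : forall b : ps B, in_ps (poisson_commutant sigma0 phi0) b -> Phi'2 b 0%N = b 0%N)
  (Hcomm1 : forall (a : ps A) (b : ps B), in_ps (poisson_commutant sigma0 phi0) b ->
      sig1 (Phi1 a) (Phi'1 b) = fun _ => 0)
  (Hcomm2 : forall (a : ps A) (b : ps B), in_ps (poisson_commutant sigma0 phi0) b ->
      sig2 (Phi2 a) (Phi'2 b) = fun _ => 0)
  (psi : ps A -> ps A) (Psi : ps B -> ps B)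
  (Hpsi : ps_poisson_iso_on (@allX A) (@allX A) pi1 pi2 psi)
  (HPsi : ps_poisson_iso_on (@allX B) (@allX B) sig1 sig2 Psi)
  (Hintertwine : forall a : ps A, Phi2 (psi a) = Psi (Phi1 a)) :
  exists psi' : ps B -> ps B,
    ps_poisson_iso_on (poisson_commutant sigma0 phi0) (poisson_commutant sigma0 phi0)
      pi'1 pi'2 psi' /\
    forall b : ps B, in_ps (poisson_commutant sigma0 phi0) b ->
      Phi'2 (psi' b) = Psi (Phi'1 b).
Proof.
set D := poisson_commutant sigma0 phi0.
have DS := commutant_subspace phi0 Hsigma0.
have [[pi'1D _] _] := Hpi'1; have [[pi'2D _] _] := Hpi'2.
have [_ Phi'1_lin _ _] := HPhi'1; have [_ Phi'2_lin _ _] := HPhi'2.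
have [Psi_morph Psi_inj Psi_onto] := HPsi.
have psi_onto a : exists a0, psi a0 = a.
  by have [_ _ psi_surj] := Hpsi; have [a0 _ <-] := psi_surj a (in_psT a); exists a0.
have Phi'1_inj := ps_linear_id0_inj DS Phi'1_lin HPhi'1_0.
have Phi'2_inj := ps_linear_id0_inj DS Phi'2_lin HPhi'2_0.
have im1 := commutant_in_image Hsigma0 Hsig1 HPhi1_0 Phi'1_lin HPhi'1_0 Hcomm1.
have im2 := commutant_in_image Hsigma0 Hsig2 HPhi2_0 Phi'2_lin HPhi'2_0 Hcomm2.
have transport := commutant_transport HPsi psi_onto Hintertwine.
have Psi_Phi'1_im b : in_ps D b -> exists2 x, in_ps D x & Phi'2 x = Psi (Phi'1 b).
  by move=> Db; apply: im2; apply/transport => a; apply: Hcomm1.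
have [psi' [psi'_morph psi'_fac]] :=
  ps_poisson_morph_factor DS (commutant_mulclosed Hsigma0) pi'1D pi'2D HPhi'2 Phi'2_inj
    (ps_poisson_morph_comp HPhi'1 Psi_morph) Psi_Phi'1_im.
have [psi'D _ _ _] := psi'_morph.
exists psi'; split=> [|b Db]; last exact: psi'_fac.
split=> // [a b Da Db psi'_ab|b Db].
- apply: Phi'1_inj => //; apply: Psi_inj => //.
  by move: (psi'_fac a Da) (psi'_fac b Db) => /= <- <-; rewrite psi'_ab.
- have [x _ Psi_x] := Psi_onto (Phi'2 b) (in_psT _).
  have [a Da Phi'1_a] : exists2 a, in_ps D a & Phi'1 a = x.
    by apply: im1; apply/transport => a; rewrite Psi_x; apply: Hcomm2.
  exists a => //; apply: Phi'2_inj (psi'D a Da) Db _.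
  by rewrite psi'_fac // /= Phi'1_a Psi_x.
Qed.
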